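(* Let $K\subset L$ be a finite extension of non-archimedean local fields with rings of integers $\mathcal{O}_K$ and $\mathcal{O}_L$, let $\pi$ be a uniformizer of $K$ and $r\in\mathbb{N}$. (i) If $T\colon\mathcal{O}_K^n\to\mathcal{O}_K^n$ is an injective $\mathcal{O}_K$-linear map, then $$|\ker T\otimes(\mathcal{O}_L/\pi^r\mathcal{O}_L)|=|\mathrm{cok}\,T\otimes(\mathcal{O}_L/\pi^r\mathcal{O}_L)|=|\ker T\otimes(\mathcal{O}_K/\pi^r\mathcal{O}_K)|^{[L:K]}=|\mathrm{cok}\,T\otimes(\mathcal{O}_K/\pi^r\mathcal{O}_K)|^{[L:K]}.$$ (ii) If $U\colon\mathcal{O}_L^n\to\mathcal{O}_L^n$ is an injective $\mathcal{O}_L$-linear map and $\Lambda=\{x\in\mathcal{O}_K^n: x\otimes1\in\mathrm{im}\,U\}$, then $$|\ker U\otimes(\mathcal{O}_L/\pi^r\mathcal{O}_L)|=|\mathrm{cok}\,U\otimes(\mathcal{O}_L/\pi^r\mathcal{O}_L)|\le|\ker(\Lambda\otimes(\mathcal{O}_K/\pi^r\mathcal{O}_K)\to(\mathcal{O}_K/\pi^r\mathcal{O}_K)^n)|^{[L:K]}=|\mathrm{cok}(\Lambda\otimes(\mathcal{O}_K/\pi^r\mathcal{O}_K)\to(\mathcal{O}_K/\pi^r\mathcal{O}_K)^n)|^{[L:K]},$$ where the last maps are induced by the inclusion $\Lambda\hookrightarrow\mathcal{O}_K^n$.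
   Context: $\mathrm{cok}$ denotes cokernel; tensor products of a map $T$ with a quotient ring mean the induced map on the corresponding free modules. *)

From HB Require Import structures.
From mathcomp Require Import all_boot all_order all_algebra all_field.
Set Implicit Arguments. Unset Strict Implicit. Unset Printing Implicit Defensive.
Import Order.TTheory GRing.Theory Num.Theory.
Local Open Scope ring_scope.

(* Non-archimedean local fields, via a discrete valuation v : F -> int.    *)
(* The value v 0 is irrelevant (conventionally +oo); only v on F^* is used.*)

Definition vclose {F : fieldType} (v : F -> int) (N : int) (x y : F) : Prop :=
  x = y \/ (x != y /\ N <= v (x - y)).

Definition vint {F : fieldType} (v : F -> int) (x : F) : Prop :=
  x = 0 \/ 0 <= v x.

(* F is a non-archimedean local field for the discrete valuation v:
   v is a (nontrivial, Z-valued hence discrete) valuation, F is complete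
   for it, and the residue field O/m is finite. *)
Definition local_field {F : fieldType} (v : F -> int) : Prop :=
  [/\ (forall x y : F, x != 0 -> y != 0 -> v (x * y) = v x + v y),
      (forall x y : F, x != 0 -> y != 0 -> x + y != 0 ->
          Order.min (v x) (v y) <= v (x + y)),
      (exists x : F, x != 0 /\ v x != 0),
      (forall u : nat -> F,
          (forall N : int, exists M : nat, forall m k : nat,
              (M <= m)%N -> (M <= k)%N -> vclose v N (u m) (u k)) ->
          exists l : F, forall N : int, exists M : nat, forall m : nat,
              (M <= m)%N -> vclose v N (u m) l) &
      (exists s : seq F, (forall y, y \in s -> vint v y) /\
          forall x, vint v x -> exists2 y, y \in s & vclose v 1 x y)].

Definition uniformizer {F : fieldType} (v : F -> int) (pi : F) : Prop :=
  [/\ pi != 0, 0 < v pi &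
      forall x : F, x != 0 -> 0 < v x -> v pi <= v x].

Definition vintv {F : fieldType} (v : F -> int) {n : nat} (x : 'rV[F]_n) : Prop :=
  forall i, vint v (x 0 i).
Definition vintm {F : fieldType} (v : F -> int) {m n : nat} (A : 'M[F]_(m, n))
  : Prop := forall i j, vint v (A i j).

(* |S / N| = k, where N <= S are additive subgroups of V: there are exactly
   k classes of S modulo N (given by pairwise incongruent representatives). *)
Definition quot_card {V : zmodType} (S N : V -> Prop) (k : nat) : Prop :=
  exists s : seq V,
    [/\ size s = k,
        (forall i, (i < k)%N -> S (nth 0 s i)),
        (forall i j, (i < k)%N -> (j < k)%N -> N (nth 0 s i - nth 0 s j) -> i = j) &
        (forall x, S x -> exists2 i, (i < k)%N & N (x - nth 0 s i))].

Definition multv {F : fieldType} (v : F -> int) {n : nat} (c : F) (x : 'rV[F]_n)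
  : Prop := exists2 y, vintv v y & x = c *: y.

(* For A : O^n -> O^n (x |-> x *m A) and c = pi^r, the map A (x) O/cO on
   (O/cO)^n. Its kernel is {x in O^n | x A in c O^n} / c O^n, and its
   cokernel is O^n / (O^n A + c O^n). *)
Definition redker_S {F : fieldType} (v : F -> int) {n : nat} (c : F)
  (A : 'M[F]_n) : 'rV[F]_n -> Prop :=
  fun x => vintv v x /\ multv v c (x *m A).
Definition redcok_N {F : fieldType} (v : F -> int) {n : nat} (c : F)
  (A : 'M[F]_n) : 'rV[F]_n -> Prop :=
  fun x => exists y z, [/\ vintv v y, vintv v z & x = y *m A + c *: z].

(* For an O-submodule Lam of O^n, the map Lam (x) O/cO -> (O/cO)^n induced
   by the inclusion; Lam (x) O/cO = Lam / c Lam. Its kernel is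
   (Lam /\ c O^n) / c Lam and its cokernel is O^n / (Lam + c O^n). *)
Definition subker_S {F : fieldType} (v : F -> int) {n : nat} (c : F)
  (Lam : 'rV[F]_n -> Prop) : 'rV[F]_n -> Prop :=
  fun x => Lam x /\ multv v c x.
Definition subker_N {F : fieldType} {n : nat} (c : F)
  (Lam : 'rV[F]_n -> Prop) : 'rV[F]_n -> Prop :=
  fun x => exists2 y, Lam y & x = c *: y.
Definition subcok_N {F : fieldType} (v : F -> int) {n : nat} (c : F)
  (Lam : 'rV[F]_n -> Prop) : 'rV[F]_n -> Prop :=
  fun x => exists y z, [/\ Lam y, vintv v z & x = y + c *: z].

(* Everything reduces to counting cosets of subgroups of abelian groups. If
   phi is an additive map between abelian groups, D <= P and C <= M subgroups
   with [P : D] = [M : C] finite and phi mapping P into M and D into C, then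
   the induced map P/D -> M/C has kernel and cokernel of equal size: P/ker and
   (phi P + C)/C are isomorphic. Applied to T (x) O/pi^r and to the map
   Lam/pi^r Lam -> (O_K/pi^r)^n (Lam has finite index in O_K^n because U is
   injective, so [Lam : pi^r Lam] = [O_K^n : pi^r O_K^n]), this gives all the
   equalities between kernels and cokernels.
   A family in O_L lifting a minimal spanning set of O_L/pi O_L over O_K/pi O_K
   is independent modulo pi, hence, K being complete, an O_K-basis of O_L; it
   has [L : K] elements. Expanding coordinates in it identifies O_L^n with
   (O_K^n)^[L:K] compatibly with T (x) O_L and with multiplication by pi^r,
   which produces the powers [L : K] in (i). In (ii), the O_L-span of Lam lies
   in im U, so O_L^n / (im U + pi^r O_L^n) is a quotient of
   (O_K^n / (Lam + pi^r O_K^n))^[L:K]. *)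

From HB Require Import structures.
From mathcomp Require Import all_boot all_order all_algebra all_field.
From mathcomp Require Import boolp zify ring.
Set Implicit Arguments. Unset Strict Implicit. Unset Printing Implicit Defensive.
Import Order.TTheory GRing.Theory Num.Theory.
Local Open Scope ring_scope.

(** * Counting cosets *)

Definition subgroup {V : zmodType} (P : V -> Prop) :=
  P 0 /\ (forall x y, P x -> P y -> P (x - y)).

Section QuotientCount.
Variable V : zmodType.
Implicit Types (S N : V -> Prop) (x y z : V).

Lemma subgroupN N x : subgroup N -> N x -> N (- x).
Proof. by case=> N0 NB Nx; rewrite -sub0r; apply: NB. Qed.

Lemma subgroupD N x y : subgroup N -> N x -> N y -> N (x + y).
Proof. by move=> hN Nx Ny; rewrite -[y]opprK; apply: hN.2 => //; apply: subgroupN. Qed.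

Lemma subgroup_sym N x y : subgroup N -> N (x - y) -> N (y - x).
Proof. by move=> hN Nxy; rewrite -opprB; apply: subgroupN. Qed.

Lemma subgroup_trans N x y z : subgroup N -> N (x - y) -> N (y - z) -> N (x - z).
Proof. by move=> hN Nxy Nyz; rewrite -[x](subrK y) -addrA; apply: subgroupD. Qed.

Lemma quot_cardP S N k : quot_card S N k ->
  exists e : 'I_k -> V, [/\ forall i, S (e i),
    forall i j, N (e i - e j) -> i = j & forall x, S x -> exists i, N (x - e i)].
Proof.
case=> s [_ Ss inj cover]; exists (fun i => nth 0 s i); split.
- by move=> i; apply: Ss.
- by move=> i j /inj eq_ij; apply/val_inj/eq_ij.
- by move=> x /cover [i lt_ik Nx]; exists (Ordinal lt_ik).
Qed.

Lemma quot_card_enum (I : finType) (e : I -> V) S N :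
  (forall i, S (e i)) -> (forall i j, N (e i - e j) -> i = j) ->
  (forall x, S x -> exists i, N (x - e i)) -> quot_card S N #|I|.
Proof.
move=> Se inj cover.
pose f i := if insub i is Some j then e (enum_val (j : 'I_#|I|)) else 0.
have fE i (lt_i : (i < #|I|)%N) : f i = e (enum_val (Ordinal lt_i)).
  by rewrite /f insubT.
exists (mkseq f #|I|); split; first by rewrite size_mkseq.
- by move=> i lt_i; rewrite nth_mkseq // fE.
- move=> i j lt_i lt_j; rewrite !nth_mkseq // !fE => /inj /enum_val_inj.
  by case.
- move=> x /cover [i Nx]; exists (enum_rank i); first exact: ltn_ord.
  rewrite nth_mkseq // fE.
  have -> : Ordinal (ltn_ord (enum_rank i)) = enum_rank i by apply: val_inj.
  by rewrite enum_rankK.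
Qed.

Lemma quot_card_gt0 S N k : S 0 -> quot_card S N k -> (0 < k)%N.
Proof. by move=> S0 [s [_ _ _ /(_ 0 S0) [i lt_ik _]]]; apply: leq_ltn_trans lt_ik. Qed.

Lemma quot_card_le S N N' a b : subgroup N -> (forall x, N x -> N' x) ->
  quot_card S N a -> quot_card S N' b -> (b <= a)%N.
Proof.
move=> hN sNN' /quot_cardP [u [_ _ cover]] /quot_cardP [w [Sw inj _]].
have /fin_all_exists [g Ng] : forall j, exists i, N (w j - u i) by move=> j; apply/cover/Sw.
suff /leq_card : injective g by rewrite !card_ord.
move=> j j' eq_g; apply/inj/sNN'.
by apply: (subgroup_trans hN (Ng j)); rewrite eq_g; apply: subgroup_sym.
Qed.

Lemma quot_card_uniq S N a b : subgroup N ->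
  quot_card S N a -> quot_card S N b -> a = b.
Proof.
move=> hN ha hb; apply/eqP.
by rewrite eqn_leq !(quot_card_le hN _ ha hb, quot_card_le hN _ hb ha).
Qed.

Lemma quot_card_mul (A B C : V -> Prop) a b : subgroup A -> subgroup B ->
  (forall x, C x -> B x) -> (forall x, B x -> A x) ->
  quot_card A B a -> quot_card B C b -> quot_card A C (a * b).
Proof.
move=> hA hB sCB sBA /quot_cardP [u [Au inj_u cover_u]] /quot_cardP [w [Bw inj_w cover_w]].
have -> : (a * b = #|{: 'I_a * 'I_b}|)%N by rewrite card_prod !card_ord.
apply: (quot_card_enum (e := fun p : 'I_a * 'I_b => u p.1 + w p.2)).
- by move=> [i j]; apply: subgroupD hA (Au i) (sBA _ (Bw j)).
- move=> [i j] [i' j'] /= Cij.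
  have Bww : B (w j - w j') by apply: hB.2.
  have Buu : B (u i - u i').
    have := hB.2 _ _ (sCB _ Cij) Bww.
    by rewrite opprB opprD !addrA subrK addrAC addrK.
  have eq_i := inj_u _ _ Buu; rewrite eq_i opprD addrACA subrr add0r in Cij.
  by rewrite eq_i (inj_w _ _ Cij).
- move=> x /cover_u [i /cover_w [j Cx]]; exists (i, j).
  by rewrite /= opprD addrA.
Qed.

Lemma quot_card_of_cover S N (s : seq V) : subgroup N ->
  (forall y, y \in s -> S y) -> (forall x, S x -> exists2 y, y \in s & N (x - y)) ->
  exists k, quot_card S N k.
Proof.
move=> hN Ss cover.
suff [t [St inj_t cover_t]] : exists t : seq V, [/\ forall y, y \in t -> S y,
    forall i j, (i < size t)%N -> (j < size t)%N -> N (nth 0 t i - nth 0 t j) -> i = j &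
    forall y, y \in s -> exists2 z, z \in t & N (y - z)].
  exists (size t), t; split => // [i lt_i|x]; first exact/St/mem_nth.
  move=> /cover [y /cover_t [z tz Nyz] Nxy].
  exists (index z t); first by rewrite index_mem.
  by rewrite nth_index //; apply: subgroup_trans Nyz.
elim: s Ss {cover} => [|y s IH] Ss; first by exists [::].
have [|t [St inj_t cover_t]] := IH; first by move=> z sz; apply: Ss; rewrite inE sz orbT.
have [[z tz Nyz]|new_y] := pselect (exists2 z, z \in t & N (y - z)).
  by exists t; split => // w; rewrite inE => /predU1P [->|]; [exists z | apply: cover_t].
exists (y :: t); split.
- by move=> w; rewrite inE => /predU1P [->|/St //]; apply: Ss; rewrite mem_head.
- move=> [|i] [|j] //= lt_i lt_j Nij; last by congr _.+1; apply: inj_t.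
  + by case: new_y; exists (nth 0 t j) => //; apply: mem_nth.
  + by case: new_y; exists (nth 0 t i); [apply: mem_nth | apply: subgroup_sym].
- move=> w; rewrite inE => /predU1P [->|/cover_t [z tz Nwz]].
    by exists y; [apply: mem_head | rewrite subrr; case: hN].
  by exists z => //; rewrite inE tz orbT.
Qed.

Lemma quot_card_index (A B C : V -> Prop) n :
  subgroup A -> subgroup B -> subgroup C ->
  (forall x, C x -> B x) -> (forall x, B x -> A x) -> quot_card A C n ->
  exists a b, [/\ quot_card A B a, quot_card B C b & (a * b)%N = n].
Proof.
move=> hA hB hC sCB sBA hn; have /quot_cardP [e [Ae _ cover]] := hn.
have [a ha] : exists a, quot_card A B a.
  apply: (quot_card_of_cover (s := [seq e i | i <- enum 'I_n])) => // [y|x].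
    by case/mapP => i _ ->.
  by case/cover => i Cx; exists (e i); [apply: map_f; rewrite mem_enum | apply: sCB].
have /fin_all_exists [h Bh] : forall i : 'I_n,
    exists z, B z /\ ((exists2 z', B z' & C (e i - z')) -> C (e i - z)).
  move=> i; have [[z Bz Cz]|no_z] := pselect (exists2 z', B z' & C (e i - z')).
    by exists z.
  by exists 0; split => //; case: hB.
have [b hb] : exists b, quot_card B C b.
  apply: (quot_card_of_cover (s := [seq h i | i <- enum 'I_n])) => // [y|x Bx].
    by case/mapP => i _ ->; case: (Bh i).
  have [i Cx] := cover x (sBA x Bx).
  have [_ Chi] := Bh i.
  exists (h i); first by apply: map_f; rewrite mem_enum.
  apply: (subgroup_trans hC Cx); apply: Chi; exists x => //; exact: subgroup_sym.
exists a, b; split => //.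
exact: quot_card_uniq hC (quot_card_mul hA hB sCB sBA ha hb) hn.
Qed.

End QuotientCount.

Lemma eq_quot_card {V : zmodType} (S S' N N' : V -> Prop) k :
  (forall x, S x <-> S' x) -> (forall x, N x <-> N' x) ->
  quot_card S N k -> quot_card S' N' k.
Proof.
move=> eqS eqN [s [size_s Ss inj cover]]; exists s; split => //.
- by move=> i /Ss /eqS.
- by move=> i j lt_i lt_j /eqN; apply: inj.
- by move=> x /eqS /cover [i lt_i /eqN]; exists i.
Qed.

Lemma quot_card_bij {V W : zmodType} (f : V -> W) (S1 N1 : V -> Prop)
    (S2 N2 : W -> Prop) k : subgroup N2 ->
  (forall x, S1 x -> S2 (f x)) ->
  (forall y, S2 y -> exists2 x, S1 x & N2 (y - f x)) ->
  (forall x x', S1 x -> S1 x' -> N2 (f x - f x') <-> N1 (x - x')) ->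
  quot_card S1 N1 k -> quot_card S2 N2 k.
Proof.
move=> hN2 fS onto fN /quot_cardP [e [Se inj cover]]; rewrite -(card_ord k).
apply: (quot_card_enum (e := f \o e)) => [i|i j|y /onto [x Sx Nyx]].
- exact/fS/Se.
- by move/fN => Nij; apply/inj/Nij.
- have [i Nxi] := cover x Sx; exists i.
  by apply: (subgroup_trans hN2 Nyx); apply/fN.
Qed.

Lemma quot_card_ffun {V : zmodType} (S N : V -> Prop) m d : subgroup N ->
  quot_card S N m ->
  quot_card (fun g : {ffun 'I_d -> V} => forall i, S (g i))
            (fun g : {ffun 'I_d -> V} => forall i, N (g i)) (m ^ d).
Proof.
move=> hN /quot_cardP [e [Se inj cover]].
have -> : (m ^ d = #|{ffun 'I_d -> 'I_m}|)%N by rewrite card_ffun !card_ord.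
apply: (quot_card_enum (e := fun h : {ffun 'I_d -> 'I_m} => [ffun i => e (h i)])).
- by move=> h i; rewrite ffunE.
- by move=> h h' Nhh'; apply/ffunP => i; apply: inj; have := Nhh' i; rewrite !ffunE.
- move=> g Sg; have /fin_all_exists [h Nh] : forall i, exists j, N (g i - e j).
    by move=> i; apply/cover/Sg.
  by exists [ffun i => h i] => i; rewrite !ffunE.
Qed.

Section AdditiveMaps.
Variables (V W : zmodType) (f : V -> W).
Hypothesis fB : {morph f : x y / x - y}.

Let f0 : f 0 = 0.
Proof. by rewrite -(subrr 0) fB subrr. Qed.

Lemma subgroup_image (P : V -> Prop) :
  subgroup P -> subgroup (fun y => exists2 x, P x & y = f x).
Proof.
move=> [P0 PB]; split; first by exists 0.
by move=> _ _ [x Px ->] [x' Px' ->]; exists (x - x'); [apply: PB | rewrite fB].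
Qed.

Lemma quot_card_ker_cok (P D : V -> Prop) (M C : W -> Prop) q :
  subgroup P -> subgroup D -> subgroup M -> subgroup C ->
  (forall x, D x -> P x) -> (forall y, C y -> M y) ->
  (forall x, P x -> M (f x)) -> (forall x, D x -> C (f x)) ->
  quot_card P D q -> quot_card M C q ->
  exists k, quot_card (fun x => P x /\ C (f x)) D k /\
            quot_card M (fun y => exists2 x, P x & C (y - f x)) k.
Proof.
move=> hP hD hM [C0 CB] sDP sCM fP fD hPD hMC.
set Ker := fun x => P x /\ C (f x).
set Img := fun y => exists2 x, P x & C (y - f x).
have hKer : subgroup Ker.
  split=> [|x x' [Px Cx] [Px' Cx']]; first by split; [case: hP | rewrite f0].
  by split; [apply: hP.2 | rewrite fB; apply: CB].
have hImg : subgroup Img.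
  split=> [|y y' [x Px Cy] [x' Px' Cy']]; first by exists 0; [case: hP | rewrite f0 subr0].
  exists (x - x'); first exact: hP.2.
  by rewrite fB opprD opprK addrACA; have := CB _ _ Cy Cy'; rewrite opprD opprK.
have CImg y : C y -> Img y by move=> Cy; exists 0; [case: hP | rewrite f0 subr0].
have ImgM y : Img y -> M y.
  by case=> x Px Cy; rewrite -(subrK (f x) y); apply: subgroupD hM (sCM _ Cy) (fP _ Px).
have [a [k [hPKer hKerD e1]]] :=
  quot_card_index hP hKer hD (fun x Dx => conj (sDP x Dx) (fD x Dx)) (fun x => @proj1 _ _) hPD.
have [a' [k' [hMImg hImgC e2]]] := quot_card_index hM hImg (conj C0 CB) CImg ImgM hMC.
(* [f] induces P / Ker ~ Img / C, so [a] divides out of both factorizations of [q]. *)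
have hImgC' : quot_card Img C a.
  apply: (quot_card_bij (f := f)) hPKer => [|x Px|y [x Px Cy]|x x' Px Px'].
  - exact: (conj C0 CB).
  - by exists x; rewrite ?subrr.
  - by exists x.
  - by rewrite -fB; split=> [Cx|[]//]; split => //; apply: hP.2.
have eq_k' : k' = a := quot_card_uniq (conj C0 CB) hImgC hImgC'.
have a_gt0 : (0 < a)%N by apply: quot_card_gt0 hPKer; case: hP.
exists k; split => //; suff <- : a' = k by [].
by apply/eqP; rewrite -(eqn_pmul2l a_gt0) e1 mulnC -eq_k' e2.
Qed.

End AdditiveMaps.

Lemma quot_card_image_index {V : zmodType} (g : V -> V) (M Lam : V -> Prop) q a :
  {morph g : x y / x - y} -> injective g -> subgroup M -> subgroup Lam ->
  (forall x, Lam x -> M x) -> (forall x, M x -> M (g x)) ->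
  (forall x, Lam x -> Lam (g x)) ->
  quot_card M (fun y => exists2 x, M x & y = g x) q -> quot_card M Lam a ->
  quot_card Lam (fun y => exists2 x, Lam x & y = g x) q.
Proof.
move=> gB g_inj hM hLam sLamM gM gLam hq ha.
have hgLam := subgroup_image gB hLam.
have g0 : g 0 = 0 by have := gB 0 0; rewrite subrr => ->; rewrite subrr.
(* Factor [M : g Lam] through [g M] and through [Lam]; [g M : g Lam] = [M : Lam]. *)
have hgM_gLam : quot_card (fun y => exists2 x, M x & y = g x)
                          (fun y => exists2 x, Lam x & y = g x) a.
  apply: (quot_card_bij (f := g)) ha => [//|x Mx|_ [x Mx ->]|x x' _ _].
  - by exists x.
  - by exists x => //; exists 0; [case: hLam | rewrite subrr g0].
  - split=> [[z Lz]|Lxx']; last by exists (x - x'); rewrite ?gB.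
    by rewrite -gB => /g_inj ->.
have hq_a : quot_card M (fun y => exists2 x, Lam x & y = g x) (q * a).
  apply: quot_card_mul hM (subgroup_image gB hM) _ _ hq hgM_gLam.
  - by move=> _ [x /sLamM Mx ->]; exists x.
  - by move=> _ [x Mx ->]; apply: gM.
have [|a' [q' [hMLam hLam_gLam e]]] := quot_card_index hM hLam hgLam _ sLamM hq_a.
  by move=> _ [x Lx ->]; apply: gLam.
have eq_a : a' = a := quot_card_uniq hLam hMLam ha.
have a_gt0 : (0 < a)%N := quot_card_gt0 hM.1 ha.
suff <- : q' = q by [].
by apply/eqP; rewrite -(eqn_pmul2l a_gt0) -{1}eq_a e mulnC.
Qed.

(** * Valuations *)

Definition is_valuation {F : fieldType} (v : F -> int) : Prop :=
  (forall x y : F, x != 0 -> y != 0 -> v (x * y) = v x + v y) /\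
  (forall x y : F, x != 0 -> y != 0 -> x + y != 0 ->
     Order.min (v x) (v y) <= v (x + y)).

Lemma local_field_valuation {F : fieldType} (v : F -> int) :
  local_field v -> is_valuation v.
Proof. by case. Qed.

Section Valuation.
Variables (F : fieldType) (v : F -> int).
Hypothesis hv : is_valuation v.
Let vM := hv.1.
Let vD := hv.2.

(* [v 0] is meaningless: [0] counts as having every valuation. *)
Definition vge (N : int) (x : F) := x = 0 \/ N <= v x.

Definition vdvd (c x : F) := exists2 z, vint v z & x = c * z.

Lemma valuation1 : v 1 = 0.
Proof.
have h : v (1 * 1) = v 1 + v 1 := vM (oner_neq0 _) (oner_neq0 _).
by rewrite mulr1 in h; lia.
Qed.

Lemma valuationV (x : F) : x != 0 -> v x^-1 = - v x.
Proof.
move=> x0; have h : v (x * x^-1) = v x + v x^-1 := vM x0 (invr_neq0 x0).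
by rewrite divff // valuation1 in h; lia.
Qed.

Lemma valuationN (x : F) : v (- x) = v x.
Proof.
have N1_0 : (-1 : F) != 0 by rewrite oppr_eq0 oner_neq0.
have vN1 : v (-1) = 0.
  have h : v (-1 * -1) = v (-1) + v (-1) := vM N1_0 N1_0.
  by rewrite mulrNN mulr1 valuation1 in h; lia.
have [->|x0] := eqVneq x 0; first by rewrite oppr0.
by rewrite -mulN1r vM // vN1 add0r.
Qed.

Lemma vgeN N (x : F) : vge N x -> vge N (- x).
Proof. by case=> [->|h]; [left; rewrite oppr0 | right; rewrite valuationN]. Qed.

Lemma vgeD N (x y : F) : vge N x -> vge N y -> vge N (x + y).
Proof.
move=> [->|Nx]; first by rewrite add0r.
move=> [->|Ny]; first by rewrite addr0; right.
have [->|xy0] := eqVneq (x + y) 0; first by left.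
have [->|x0] := eqVneq x 0; first by rewrite add0r; right.
have [->|y0] := eqVneq y 0; first by rewrite addr0; right.
by right; apply: le_trans (vD x0 y0 xy0); rewrite le_min Nx Ny.
Qed.

Lemma vgeB N (x y : F) : vge N x -> vge N y -> vge N (x - y).
Proof. by move=> Nx Ny; apply/vgeD/vgeN. Qed.

Lemma vgeM N M (x y : F) : vge N x -> vge M y -> vge (N + M) (x * y).
Proof.
have [->|x0] := eqVneq x 0; first by rewrite mul0r; left.
have [->|y0] := eqVneq y 0; first by rewrite mulr0; left.
case=> [/eqP|Nx]; first by rewrite (negPf x0).
by case=> [/eqP|My]; [rewrite (negPf y0) | right; rewrite vM // lerD].
Qed.

Lemma vge_le N M (x : F) : M <= N -> vge N x -> vge M x.
Proof. by move=> MN [->|Nx]; [left | right; apply: le_trans Nx]. Qed.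

Lemma vge_sum N I (r : seq I) (P : pred I) (G : I -> F) :
  (forall i, P i -> vge N (G i)) -> vge N (\sum_(i <- r | P i) G i).
Proof. by move=> NG; apply: big_ind => //; [left | apply: vgeD]. Qed.

Lemma vge_eq0 (x : F) : (forall N, vge N x) -> x = 0.
Proof. by move=> Nx; case: (Nx (v x + 1)) => //; lia. Qed.

Lemma vint1 : vint v 1. Proof. by right; rewrite valuation1. Qed.

Lemma vintM (x y : F) : vint v x -> vint v y -> vint v (x * y).
Proof. by move=> hx hy; have := vgeM hx hy; rewrite addr0. Qed.

Lemma vint_prod I (r : seq I) (P : pred I) (G : I -> F) :
  (forall i, P i -> vint v (G i)) -> vint v (\prod_(i <- r | P i) G i).
Proof. by move=> hG; apply: big_ind => //; [apply: vint1 | apply: vintM]. Qed.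

Lemma vintX (x : F) k : vint v x -> vint v (x ^+ k).
Proof. by move=> hx; elim: k => [|k IH]; [apply: vint1 | rewrite exprS; apply: vintM]. Qed.

Lemma vint_det n (A : 'M[F]_n) : (forall i j, vint v (A i j)) -> vint v (\det A).
Proof.
move=> hA; apply: vge_sum => s _; apply: vintM; first exact/vintX/vgeN/vint1.
exact: vint_prod.
Qed.

Lemma vint_adj n (A : 'M[F]_n) : (forall i j, vint v (A i j)) ->
  forall i j, vint v (\adj A i j).
Proof.
move=> hA i j; rewrite mxE; apply: vintM; first exact/vintX/vgeN/vint1.
by apply: vint_det => k l; rewrite !mxE.
Qed.

Lemma vint_div (c x : F) : c != 0 -> vge (v c) x -> vint v (x / c).
Proof.
move=> c0 [->|cx]; first by rewrite mul0r; left.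
have [->|x0] := eqVneq x 0; first by rewrite mul0r; left.
by right; rewrite vM ?invr_neq0 // valuationV //; lia.
Qed.

Lemma vdvdP (c x : F) : c != 0 -> vdvd c x <-> vint v (x / c).
Proof.
move=> c0; split=> [[z hz ->]|hx]; first by rewrite mulrC mulKf.
by exists (x / c); rewrite // mulrC divfK.
Qed.

Lemma vdvd_mull (c x y : F) : vint v x -> vdvd c y -> vdvd c (x * y).
Proof. by move=> hx [z hz ->]; exists (x * z); [apply: vintM | rewrite mulrCA]. Qed.

Lemma vdvd_mulr_divisor (c d x : F) : vint v d -> vdvd (c * d) x -> vdvd c x.
Proof. by move=> hd [z hz ->]; exists (d * z); [apply: vintM | rewrite mulrA]. Qed.

Lemma subgroup_vdvd (c : F) : subgroup (vdvd c).
Proof.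
split=> [|_ _ [z hz ->] [z' hz' ->]]; first by exists 0; [left | rewrite mulr0].
by exists (z - z'); [apply: vgeB | rewrite mulrBr].
Qed.

Lemma valuationX (p : F) r : p != 0 -> v (p ^+ r) = r%:Z * v p.
Proof.
move=> p0; elim: r => [|r IH]; first by rewrite expr0 valuation1 mul0r.
by rewrite exprS vM ?expf_neq0 // IH; lia.
Qed.

Lemma vint_scale (p x : F) s : p != 0 -> 0 < v p -> (`|v x| <= s)%N ->
  vint v (p ^+ s * x).
Proof.
move=> p0 vp_gt0 le_s; have [->|x0] := eqVneq x 0; first by rewrite mulr0; left.
right; rewrite vM ?expf_neq0 // valuationX //.
have : (`|v x|%:Z <= s%:Z) by rewrite lez_nat.
rewrite abszE => le_s'; have := ler_norm (- v x); rewrite normrN; nia.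
Qed.

Lemma vcloseP N (x y : F) : vclose v N x y <-> vge N (x - y).
Proof.
split=> [[->|[_ Nxy]]|[/eqP|Nxy]]; [by left; rewrite subrr | by right | |].
  by rewrite subr_eq0 => /eqP ->; left.
by have [->|ne_xy] := eqVneq x y; [left | right].
Qed.

Lemma vdvd1 (p : F) : 0 < v p -> ~ vdvd p 1.
Proof.
move=> vp_gt0 [z hz e1].
have /andP [p0 z0] : (p != 0) && (z != 0) by rewrite -negb_or -mulf_eq0 -e1 oner_neq0.
have := vM p0 z0; rewrite -e1 valuation1; case: hz => [/eqP|]; first by rewrite (negPf z0).
lia.
Qed.

Lemma local_field_limit (u : nat -> F) : local_field v ->
  (forall s t, (s <= t)%N -> vge s%:Z (u t - u s)) ->
  exists l, forall N, exists M, forall m, (M <= m)%N -> vge N (u m - l).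
Proof.
case=> _ _ _ complete _ u_cauchy.
have [|l ul] := complete u; last first.
  by exists l => N; have [M hM] := ul N; exists M => m /hM /vcloseP.
move=> N; exists `|N|%N => m m' le_m le_m'; apply/vcloseP.
have := vgeB (u_cauchy _ _ le_m) (u_cauchy _ _ le_m'); rewrite opprB addrA subrK.
by apply: vge_le; lia.
Qed.

Lemma exists_uniformizer : (exists x, x != 0 /\ v x != 0) -> exists p, uniformizer v p.
Proof.
case=> x [x0 vx0].
have [y [y0 vy_gt0]] : exists y, y != 0 /\ 0 < v y.
  have [vx_gt0|vx_le0] := ltP 0 (v x); first by exists x.
  by exists x^-1; rewrite invr_neq0 // valuationV //; split => //; lia.
have ex_n : exists n, `[< exists2 y, y != 0 & v y = n.+1%:Z >].
  by exists `|v y|.-1; apply/asboolP; exists y => //; lia.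
case: (ex_minnP ex_n) => n /asboolP [p p0 vp] min_n.
exists p; split=> [//||z z0 vz_gt0]; first by rewrite vp.
rewrite vp; have : (n <= `|v z|.-1)%N by apply: min_n; apply/asboolP; exists z => //; lia.
lia.
Qed.

Section Uniformizer.
Variable p : F.
Hypothesis p_unif : uniformizer v p.

Let p0 : p != 0. Proof. by case: p_unif. Qed.
Let vp_gt0 : 0 < v p. Proof. by case: p_unif. Qed.

Lemma vge_exp_unif r (z : F) : vint v z -> vge r%:Z (p ^+ r * z).
Proof.
move=> hz; have := vgeM (or_intror (lexx (v (p ^+ r)))) hz; rewrite addr0.
by apply: vge_le; rewrite valuationX //; nia.
Qed.

Lemma vdvd_unif (x : F) : vge 1 x -> vdvd p x.
Proof.
move=> hx; apply/vdvdP => //; apply: vint_div => //.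
case: hx => [->|vx]; first by left.
have [->|x0] := eqVneq x 0; [by left | right].
by case: p_unif => _ _; apply => //; lia.
Qed.

Lemma residue_cover_exp (R : seq F) : (forall y, y \in R -> vint v y) ->
  (forall x, vint v x -> exists2 y, y \in R & vclose v 1 x y) ->
  forall r, exists s : seq F, (forall y, y \in s -> vint v y) /\
    forall x, vint v x -> exists2 y, y \in s & vdvd (p ^+ r) (x - y).
Proof.
move=> R_vint R_cover; elim=> [|r [s [s_vint s_cover]]].
  exists [:: 0]; split=> [y|x hx]; first by rewrite inE => /eqP ->; left.
  by exists 0; rewrite ?mem_head // subr0 expr0; exists x; rewrite ?mul1r.
exists [seq a + p * b | a <- R, b <- s]; split.
  move=> _ /allpairsP [[a b] [aR bs ->]] /=; apply: vgeD; first exact: R_vint.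
  by apply: vintM; [right; apply: ltW | apply: s_vint].
move=> x hx; have [a aR x_a] := R_cover x hx.
have [y hy x_ay] : vdvd p (x - a).
  by apply: vdvd_unif; case: x_a => [->|[_ h]]; [left; rewrite subrr | right].
have [b bs [z hz y_bz]] := s_cover y hy.
exists (a + p * b); first by apply/allpairsP; exists (a, b).
by exists z => //; rewrite opprD addrA x_ay -mulrBr y_bz exprS mulrA.
Qed.

End Uniformizer.

Section Vectors.
Variable n : nat.

Lemma vintv0 : vintv v (0 : 'rV[F]_n).
Proof. by move=> i; rewrite mxE; left. Qed.

Lemma vintvB (x y : 'rV[F]_n) : vintv v x -> vintv v y -> vintv v (x - y).
Proof. by move=> hx hy i; rewrite !mxE; apply: vgeB (hx i) (hy i). Qed.

Lemma vintv_sum I (r : seq I) (P : pred I) (X : I -> 'rV[F]_n) :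
  (forall i, P i -> vintv v (X i)) -> vintv v (\sum_(i <- r | P i) X i).
Proof. by move=> hX j; rewrite summxE; apply: vge_sum => i /hX; apply. Qed.

Lemma vintvZ (c : F) (x : 'rV[F]_n) : vint v c -> vintv v x -> vintv v (c *: x).
Proof. by move=> hc hx i; rewrite !mxE; apply: vintM hc (hx i). Qed.

Lemma vintv_mul (x : 'rV[F]_n) (A : 'M[F]_n) : vintv v x -> vintm v A -> vintv v (x *m A).
Proof.
by move=> hx hA i; rewrite !mxE; apply: vge_sum => j _; apply: vintM (hx j) (hA j i).
Qed.

Lemma subgroup_vintv : subgroup (@vintv F v n).
Proof. by split; [apply: vintv0 | apply: vintvB]. Qed.

Lemma subgroup_multv (c : F) : subgroup (@multv F v n c).
Proof. exact/(subgroup_image (scalerBr c))/subgroup_vintv. Qed.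

Lemma multv_vintv (c : F) (x : 'rV[F]_n) : vint v c -> multv v c x -> vintv v x.
Proof. by move=> hc [y hy ->]; apply: vintvZ. Qed.

Lemma multvE (c : F) (x : 'rV[F]_n) : c != 0 -> multv v c x <-> vintv v (c^-1 *: x).
Proof.
move=> c0; split=> [[y hy ->]|hx]; first by rewrite scalerA mulVf // scale1r.
by exists (c^-1 *: x); rewrite // scalerA divff // scale1r.
Qed.

Lemma multv_mul (c : F) (x : 'rV[F]_n) (A : 'M[F]_n) :
  vintm v A -> multv v c x -> multv v c (x *m A).
Proof. by move=> hA [y hy ->]; exists (y *m A); [apply: vintv_mul | rewrite scalemxAl]. Qed.

Lemma det_neq0_of_vint_inj (p : F) (A : 'M[F]_n) : p != 0 -> 0 < v p ->
  (forall x, vintv v x -> x *m A = 0 -> x = 0) -> \det A != 0.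
Proof.
move=> p0 vp_gt0 A_inj; apply/negP => /det0P [y y0 yA0].
pose s := (\sum_j `|v (y 0%R j)|)%N.
have py_vint : vintv v (p ^+ s *: y).
  move=> j; rewrite mxE; apply: vint_scale => //.
  by rewrite /s (bigD1 j) //= leq_addr.
have : p ^+ s *: y = 0 by apply: A_inj py_vint _; rewrite -scalemxAl yA0 scaler0.
by move/eqP; rewrite scaler_eq0 expf_eq0 (negPf p0) andbF (negPf y0).
Qed.

Lemma quot_card_vintv (c : F) q : c != 0 -> quot_card (vint v) (vdvd c) q ->
  quot_card (@vintv F v n) (multv v c) (q ^ n).
Proof.
move=> c0 /(quot_card_ffun n (subgroup_vdvd c)).
apply: (quot_card_bij (f := fun g : {ffun 'I_n -> F} => \row_i g i)).
- exact: subgroup_multv.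
- by move=> g hg i; rewrite mxE.
- move=> y hy; exists [ffun i => y 0 i] => [i|]; first by rewrite ffunE.
  exists 0; first exact: vintv0.
  by apply/rowP => i; rewrite !mxE ffunE subrr mulr0.
- move=> g g' _ _; split=> [[y hy e] i|h].
    by exists (y 0 i); [apply: hy | move/rowP: e => /(_ i); rewrite !mxE !ffunE].
  exists (c^-1 *: (\row_i g i - \row_i g' i)); last by rewrite scalerA divff // scale1r.
  move=> i; rewrite !mxE; have [z hz] := h i; rewrite !ffunE => ->.
  by rewrite mulKf.
Qed.

Lemma exists_quot_card_multv p r : local_field v -> uniformizer v p ->
  exists q, quot_card (@vintv F v n) (multv v (p ^+ r)) q.
Proof.
case=> _ _ _ _ [R [R_vint R_cover]] p_unif.
have [s [s_vint s_cover]] := residue_cover_exp p_unif R_vint R_cover r.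
have [q hq] := quot_card_of_cover (subgroup_vdvd (p ^+ r)) s_vint s_cover.
by exists (q ^ n)%N; apply: quot_card_vintv hq; rewrite expf_neq0 //; case: p_unif.
Qed.

Lemma quot_card_redker_redcok (c : F) (A : 'M[F]_n) q : vint v c -> vintm v A ->
  quot_card (@vintv F v n) (multv v c) q ->
  exists k, quot_card (redker_S v c A) (multv v c) k /\
            quot_card (vintv v) (redcok_N v c A) k.
Proof.
move=> hc hA hq; have hmult := subgroup_multv c.
have [k [hker hcok]] := quot_card_ker_cok (fun u w => mulmxBl u w A) subgroup_vintv hmult
  subgroup_vintv hmult (fun x => multv_vintv hc) (fun x => multv_vintv hc)
  (fun x hx => vintv_mul hx hA) (fun x => multv_mul hA) hq hq.
exists k; split => //; apply: eq_quot_card hcok => // y; split.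
  case=> x hx [z hz e]; exists x, z; split => //.
  by rewrite -e addrC subrK.
by case=> x [z [hx hz ->]]; exists x => //; exists z; rewrite // addrC addKr.
Qed.

Lemma subgroup_subcok (c : F) (Lam : 'rV[F]_n -> Prop) :
  subgroup Lam -> subgroup (subcok_N v c Lam).
Proof.
move=> [Lam0 LamB]; split.
  by exists 0, 0; split=> //; [apply: vintv0 | rewrite scaler0 addr0].
move=> _ _ [y [z [Ly hz ->]]] [y' [z' [Ly' hz' ->]]].
exists (y - y'), (z - z'); split; [exact: LamB | exact: vintvB |].
by rewrite scalerBr opprD addrACA.
Qed.

Lemma quot_card_subker_subcok (c c0 : F) (Lam : 'rV[F]_n -> Prop) q q0 :
  c != 0 -> vint v c -> subgroup Lam -> (forall x, Lam x -> vintv v x) ->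
  (forall x, Lam x -> Lam (c *: x)) -> (forall x, multv v c0 x -> Lam x) ->
  quot_card (@vintv F v n) (multv v c) q ->
  quot_card (@vintv F v n) (multv v c0) q0 ->
  exists m, quot_card (subker_S v c Lam) (subker_N c Lam) m /\
            quot_card (vintv v) (subcok_N v c Lam) m.
Proof.
move=> c_neq0 hc hLam Lam_vint cLam c0Lam hq hq0.
have [a [_ [ha _ _]]] := quot_card_index subgroup_vintv hLam
  (subgroup_multv c0) c0Lam Lam_vint hq0.
have hLamq : quot_card Lam (subker_N c Lam) q.
  apply: (quot_card_image_index (scalerBr c) (scalerI c_neq0) subgroup_vintv
    hLam Lam_vint _ cLam hq ha).
  by move=> x; apply: vintvZ.
have ker_Lam y : subker_N c Lam y -> Lam y by case=> x hx ->; apply: cLam.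
have ker_multv y : subker_N c Lam y -> multv v c y.
  by case=> x hx ->; exists x => //; apply: Lam_vint.
have [m [hker hcok]] := quot_card_ker_cok (f := id) (fun _ _ => erefl) hLam
  (subgroup_image (scalerBr c) hLam) subgroup_vintv (subgroup_multv c)
  ker_Lam (fun x => multv_vintv hc) Lam_vint ker_multv hLamq hq.
exists m; split => //; apply: eq_quot_card hcok => // y; split.
  by case=> x hx [z hz e]; exists x, z; split => //; rewrite -e addrC subrK.
by case=> x [z [hx hz ->]]; exists x => //; exists z; rewrite // addrC addKr.
Qed.

End Vectors.
End Valuation.

(** * Integral bases and base change *)

Section Extension.
Variables (K : fieldType) (L : fieldExtType K) (vL : L -> int).
Hypothesis hL : local_field vL.
Hypothesis hK : local_field (fun a : K => vL (in_alg L a)).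
Variable pi : K.
Hypothesis hpi : uniformizer (fun a : K => vL (in_alg L a)) pi.

Local Notation vK := (fun a : K => vL (in_alg L a)).

Let hvL : is_valuation vL := local_field_valuation hL.
Let hvK : is_valuation vK := local_field_valuation hK.
Let pi0 : pi != 0. Proof. by case: hpi. Qed.
Let vpi_gt0 : 0 < vK pi. Proof. by case: hpi. Qed.
Let piA0 : in_alg L pi != 0. Proof. by rewrite fmorph_eq0. Qed.

Lemma vge_alg N (a : K) : vge vK N a -> vge vL N (in_alg L a).
Proof. by case=> [->|h]; [left; rewrite rmorph0 | right]. Qed.

Lemma vint_algE (a : K) : vint vL (in_alg L a) <-> vint vK a.
Proof.
split=> [[/eqP|h]|]; [by rewrite fmorph_eq0 => /eqP ->; left | by right |].
exact: vge_alg.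
Qed.

Lemma vge_alg_exp t (y : L) : vint vL y -> vge vL t%:Z (in_alg L (pi ^+ t) * y).
Proof.
move=> y_vint; rewrite -[t%:Z]addr0; apply: (vgeM hvL) y_vint; apply: vge_alg.
by rewrite -[pi ^+ t]mulr1; apply: (vge_exp_unif hvK hpi); apply: vint1.
Qed.

Lemma residue_cover_L : exists s : seq L, (forall y, y \in s -> vint vL y) /\
  forall x, vint vL x -> exists2 y, y \in s & vdvd vL (in_alg L pi) (x - y).
Proof.
case: hL => _ _ nontriv _ [R [R_vint R_cover]].
have [p p_unif] := exists_uniformizer hvL nontriv.
have [s [s_vint s_cover]] := residue_cover_exp hvL p_unif R_vint R_cover `|vK pi|.
exists s; split => // x hx; have [y ys [z hz e]] := s_cover x hx.
exists y => //; apply/(vdvdP _ _ piA0)/(vint_div hvL piA0).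
by rewrite e; apply: vge_le (vge_exp_unif hvL p_unif _ hz); lia.
Qed.

Definition lcomb k (b : 'I_k -> L) (a : 'I_k -> K) : L := \sum_i a i *: b i.

Lemma lcombB k (b : 'I_k -> L) a a' :
  lcomb b (fun i => a i - a' i) = lcomb b a - lcomb b a'.
Proof. by rewrite /lcomb -sumrB; apply: eq_bigr => i _; rewrite scalerBl. Qed.

Lemma lcombD k (b : 'I_k -> L) a a' :
  lcomb b (fun i => a i + a' i) = lcomb b a + lcomb b a'.
Proof. by rewrite /lcomb -big_split; apply: eq_bigr => i _; rewrite scalerDl. Qed.

Lemma lcomb0 k (b : 'I_k -> L) : lcomb b (fun=> 0) = 0.
Proof. by rewrite /lcomb big1 // => i _; rewrite scale0r. Qed.

Lemma lcombZ k (b : 'I_k -> L) (c : K) a :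
  lcomb b (fun i => c * a i) = c *: lcomb b a.
Proof. by rewrite /lcomb scaler_sumr; apply: eq_bigr => i _; rewrite scalerA. Qed.

Lemma vge_lcomb N k (b : 'I_k -> L) a : (forall i, vint vL (b i)) ->
  (forall i, vge vK N (a i)) -> vge vL N (lcomb b a).
Proof.
move=> b_vint Na; apply: (vge_sum hvL) => i _; rewrite -mulr_algl -in_algE -[N]addr0.
apply: (vgeM hvL); [exact: vge_alg | exact: b_vint].
Qed.

Lemma lcomb_lift k (b : 'I_k.+1 -> L) a j :
  lcomb b a = a j *: b j + lcomb (fun i => b (lift j i)) (fun i => a (lift j i)).
Proof. by rewrite /lcomb (bigD1_ord j). Qed.

Definition residue_spanning k (b : 'I_k -> L) :=
  (forall i, vint vL (b i)) /\
  forall x, vint vL x -> exists2 a : 'I_k -> K,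
    (forall i, vint vK (a i)) & vdvd vL (in_alg L pi) (x - lcomb b a).

Definition residue_free k (b : 'I_k -> L) :=
  forall a : 'I_k -> K, (forall i, vint vK (a i)) ->
    vdvd vL (in_alg L pi) (lcomb b a) -> forall i, vdvd vK pi (a i).

Lemma exists_residue_spanning : exists k (b : 'I_k -> L), residue_spanning b.
Proof.
have [s [s_vint s_cover]] := residue_cover_L.
exists (size s), (fun i => nth 0 s i); split=> [i|x hx]; first exact/s_vint/mem_nth.
have [y ys x_y] := s_cover x hx; have lt_ys : (index y s < size s)%N by rewrite index_mem.
exists (fun i => (i == Ordinal lt_ys)%:R) => [i|].
  by case: (_ == _); [apply: vint1 | left].
rewrite /lcomb (bigD1 (Ordinal lt_ys)) //= eqxx scale1r nth_index // big1 ?addr0 //.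
by move=> i /negPf ->; rewrite scale0r.
Qed.

Lemma residue_spanning_drop k (b : 'I_k.+1 -> L) a j :
  residue_spanning b -> (forall i, vint vK (a i)) ->
  vdvd vL (in_alg L pi) (lcomb b a) -> a j != 0 -> vK (a j) = 0 ->
  residue_spanning (fun i => b (lift j i)).
Proof.
move=> [b_vint b_span] a_vint ba aj0 vaj0; split=> [i|x /b_span [c c_vint x_c]].
  exact: b_vint.
pose e := c j / a j.
have e_vint : vint vK e.
  rewrite /e; apply: (vintM hvK); first exact: c_vint.
  by right; rewrite (valuationV hvK) // vaj0 oppr0.
exists (fun i => c (lift j i) - e * a (lift j i)) => [i|].
  by apply: (vgeB hvK); [apply: c_vint | apply: (vintM hvK)].
have -> : x - lcomb (fun i => b (lift j i)) (fun i => c (lift j i) - e * a (lift j i)) =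
          (x - lcomb b c) + e *: lcomb b a.
  rewrite lcombB lcombZ (lcomb_lift b c j) (lcomb_lift b a j) scalerDr.
  by rewrite scalerA divfK //; ring.
apply: subgroupD (subgroup_vdvd hvL _) x_c _.
by rewrite -mulr_algl; apply: (vdvd_mull hvL) ba; apply/vint_algE.
Qed.

Lemma exists_residue_basis :
  exists k (b : 'I_k -> L), residue_spanning b /\ residue_free b.
Proof.
have ex_k : exists k, `[< exists b : 'I_k -> L, residue_spanning b >].
  by have [k [b b_span]] := exists_residue_spanning; exists k; apply/asboolP; exists b.
case: (ex_minnP ex_k) => k /asboolP [b b_span] min_k.
(* A relation mod [pi] with a unit coefficient would let us drop a vector. *)
exists k, b; split => // a a_vint ba i; apply: contrapT => not_dvd.
have ai0 : a i != 0.
  by apply/eqP => ai0; apply: not_dvd; rewrite ai0; exists 0; [left | rewrite mulr0].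
have vai0 : vK (a i) = 0.
  case: (a_vint i) => [/eqP|vai_ge0]; first by rewrite (negPf ai0).
  apply/eqP; rewrite eq_le vai_ge0 andbT; apply: contra_notT not_dvd; rewrite -ltNge.
  by move=> vai_gt0; apply: (vdvd_unif hvK hpi); right; lia.
move: i b b_span min_k a a_vint ba ai0 vai0 {not_dvd}; case: k => [[] //|k].
move=> i b b_span min_k a a_vint ba ai0 vai0.
suff : (k < k)%N by rewrite ltnn.
apply: min_k; apply/asboolP; eexists.
exact: residue_spanning_drop b_span a_vint ba ai0 vai0.
Qed.

Lemma exists_quot_card_multvK n r :
  exists q, quot_card (@vintv K vK n) (multv vK (pi ^+ r)) q.
Proof. exact: (exists_quot_card_multv hvK n r hK hpi). Qed.

Definition descent_lattice n (U : 'M[L]_n) (x : 'rV[K]_n) : Prop :=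
  vintv vK x /\ exists2 y : 'rV[L]_n, vintv vL y & map_mx (in_alg L) x = y *m U.

Lemma subgroup_descent_lattice n (U : 'M[L]_n) : subgroup (descent_lattice U).
Proof.
split=> [|x x' [x_vint [y y_vint xU]] [x'_vint [y' y'_vint x'U]]].
  by split; [apply: vintv0 | exists 0; rewrite ?map_mx0 ?mul0mx //; apply: vintv0].
split; first exact: vintvB.
by exists (y - y'); [apply: vintvB | rewrite map_mxB xU x'U mulmxBl].
Qed.

Lemma descent_lattice_scale n (U : 'M[L]_n) c x : vint vK c ->
  descent_lattice U x -> descent_lattice U (c *: x).
Proof.
move=> c_vint [x_vint [y y_vint xU]]; split; first exact: vintvZ.
exists (in_alg L c *: y); last by rewrite map_mxZ xU scalemxAl.
by apply: (vintvZ hvL) y_vint; apply/vint_algE.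
Qed.

Lemma descent_lattice_multv n (U : 'M[L]_n) : vintm vL U -> \det U != 0 ->
  exists N, forall x, multv vK (pi ^+ N) x -> descent_lattice U x.
Proof.
move=> U_vint detU0; pose N := `|vL (\det U)^-1|%N.
have e_vint : vint vL (in_alg L (pi ^+ N) * (\det U)^-1).
  by rewrite rmorphXn; apply: (vint_scale hvL piA0); [exact: vpi_gt0 | exact: leqnn].
exists N => _ [z z_vint ->]; split.
  by apply: (vintvZ hvK) z_vint; apply: (vintX hvK); right; apply: ltW.
exists ((in_alg L (pi ^+ N) * (\det U)^-1) *: (map_mx (in_alg L) z *m \adj U)).
  apply: (vintvZ hvL) e_vint _; apply: (vintv_mul hvL); last exact: vint_adj.
  by move=> j; rewrite mxE; apply/vint_algE/z_vint.
rewrite -scalemxAl -mulmxA mul_adj_mx mul_mx_scalar scalerA mulfVK //.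
by rewrite map_mxZ.
Qed.

Section IntegralBasis.
Variables (k : nat) (b : 'I_k -> L).
Hypotheses (b_span : residue_spanning b) (b_free : residue_free b).

Lemma lcomb_vint_coef a : vint vL (lcomb b a) -> forall i, vint vK (a i).
Proof.
move=> ba_vint i0; apply: contrapT => not_vint.
have ai0_neq0 : a i0 != 0 by apply/eqP => ai0; apply: not_vint; left.
have [j /= aj0 min_j] := arg_minP (fun i => vK (a i)) (ai0_neq0 : (fun i => a i != 0) i0).
have vaj_lt0 : vK (a j) < 0.
  have := min_j i0 ai0_neq0; case: ltP => // vaj_ge0 le_j.
  by case: not_vint; right; apply: le_trans le_j.
have [e e_vint aj_inv] : vdvd vK pi (a j)^-1.
  by apply: (vdvd_unif hvK hpi); right; rewrite (valuationV hvK) //; lia.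
pose a' i := (a j)^-1 * a i.
have a'_vint i : vint vK (a' i).
  have [ai0|ai0] := eqVneq (a i) 0; first by rewrite /a' ai0 mulr0; left.
  by rewrite /a' mulrC; apply: (vint_div hvK aj0); right; apply: min_j.
have ba' : vdvd vL (in_alg L pi) (lcomb b a').
  exists (e *: lcomb b a); last by rewrite lcombZ aj_inv -scalerA -mulr_algl.
  rewrite -mulr_algl; apply: (vintM hvL) => //.
  by have /vint_algE := e_vint.
have := b_free a'_vint ba' j; rewrite /a' mulVf //.
exact/vdvd1.
Qed.

Lemma lcomb_vdvd_coef c a : c != 0 ->
  vdvd vL (in_alg L c) (lcomb b a) -> forall i, vdvd vK c (a i).
Proof.
move=> c0 [y y_vint e] i; apply/vdvdP => //; rewrite mulrC.
apply: lcomb_vint_coef (fun i => c^-1 * a i) _ i.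
by rewrite lcombZ e -scalerAl scalerA mulVf // scale1r mul1r.
Qed.

Lemma lcomb_inj a : lcomb b a = 0 -> forall i, a i = 0.
Proof.
move=> ba0 i; apply: contrapT => /eqP ai0.
have c0 : pi * a i != 0 by rewrite mulf_neq0.
have : vdvd vL (in_alg L (pi * a i)) (lcomb b a).
  by rewrite ba0; apply: (subgroup_vdvd hvL _).1.
move/(lcomb_vdvd_coef c0)/(_ i) => [z z_vint e].
apply: (vdvd1 hvK vpi_gt0); exists z => //.
by apply: (mulIf ai0); rewrite mul1r {1}e mulrAC.
Qed.

Lemma lcomb_approx x : vint vL x -> forall t, exists2 a : 'I_k -> K,
  forall i, vint vK (a i) & vdvd vL (in_alg L (pi ^+ t)) (x - lcomb b a).
Proof.
move=> x_vint; elim=> [|t [a a_vint [y y_vint e]]].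
  by exists (fun=> 0) => [i|]; [left | exists x; rewrite // lcomb0 subr0 rmorph1 mul1r].
have [a' a'_vint [z z_vint e']] := b_span.2 y y_vint.
exists (fun i => a i + pi ^+ t * a' i) => [i|].
  apply: (vgeD hvK); first exact: a_vint.
  by apply: (vintM hvK); [apply: (vintX hvK); right; apply: ltW | apply: a'_vint].
exists z => //; rewrite lcombD lcombZ opprD addrA e -mulr_algl -in_algE -mulrBr e'.
by rewrite exprSr rmorphM mulrA.
Qed.

Lemma lcomb_vint_surj x : vint vL x ->
  exists2 a : 'I_k -> K, forall i, vint vK (a i) & x = lcomb b a.
Proof.
move=> x_vint.
have /choice [A A_approx] : forall t : nat, exists a : 'I_k -> K,
    (forall i, vint vK (a i)) /\ vdvd vL (in_alg L (pi ^+ t)) (x - lcomb b a).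
  by move=> t; have [a ? ?] := lcomb_approx x_vint t; exists a.
(* Approximations chosen independently for each [t] are automatically Cauchy. *)
have A_cauchy i s t : (s <= t)%N -> vge vK s%:Z (A t i - A s i).
  move=> le_st; have pis0 : pi ^+ s != 0 by rewrite expf_neq0.
  have [|z z_vint ->] := lcomb_vdvd_coef pis0 (a := fun i => A t i - A s i) _ i.
    have -> : lcomb b (fun i => A t i - A s i) =
              (x - lcomb b (A s)) - (x - lcomb b (A t)) by rewrite lcombB; ring.
    apply: (subgroup_vdvd hvL _).2; first exact: (A_approx s).2.
    apply: (vdvd_mulr_divisor hvL (d := in_alg L (pi ^+ (t - s)))).
      by apply/vint_algE/(vintX hvK); right; apply: ltW.
    by rewrite -rmorphM -exprD subnKC //; apply: (A_approx t).2.
  by apply: (vge_exp_unif hvK hpi).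
have /fin_all_exists [l l_lim] : forall i, exists l, forall N, exists M,
    forall m, (M <= m)%N -> vge vK N (A m i - l).
  by move=> i; apply: (local_field_limit hvK) hK _ => s t; apply: A_cauchy.
exists l => [i|].
  have [M hM] := l_lim i 0; have := vgeB hvK ((A_approx M).1 i) (hM M (leqnn M)).
  by rewrite opprB addrC subrK.
apply/eqP; rewrite -subr_eq0; apply/eqP; apply: vge_eq0 => N.
have /fin_all_exists [M hM] : forall i, exists M,
  forall m, (M <= m)%N -> vge vK N (A m i - l i) by move=> i; apply: l_lim.
pose t := maxn `|N| (\max_i M i).
have -> : x - lcomb b l = (x - lcomb b (A t)) + lcomb b (fun i => A t i - l i).
  by rewrite lcombB addrA subrK.
apply: (vgeD hvL).
  have [z z_vint ->] := (A_approx t).2.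
  by apply: vge_le (vge_alg_exp t z_vint); rewrite /t; lia.
apply: vge_lcomb => [|i]; first exact: b_span.1.
by apply: hM; rewrite /t (leq_trans (leq_bigmax i)) // leq_maxr.
Qed.

Lemma lcomb_surj x : exists a : 'I_k -> K, x = lcomb b a.
Proof.
have := vint_scale hvL (p := in_alg L pi) (x := x) piA0 vpi_gt0 (leqnn _).
rewrite -rmorphXn => /lcomb_vint_surj [a _ e].
exists (fun i => (pi ^+ `|vL x|)^-1 * a i).
by rewrite lcombZ -e -scalerAl scalerA mulVf ?expf_neq0 // scale1r mul1r.
Qed.

Lemma dim_fullv : \dim {:L} = k.
Proof.
apply: (size_basis (X := [tuple b i | i < k])); apply/andP; split.
  rewrite eqEsubv subvf /=; apply/subvP => x _; have [a ->] := lcomb_surj x.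
  by apply: memv_suml => i _; apply/memvZ/memv_span; rewrite -tnth_mktuple mem_tnth.
apply/freeP => a a0 i; apply: lcomb_inj i; rewrite -{}a0 /lcomb.
by apply: eq_bigr => j _; rewrite -tnth_nth tnth_mktuple.
Qed.

Section Expansion.
Variable n : nat.
Implicit Types g : {ffun 'I_k -> 'rV[K]_n}.

Definition expand g : 'rV[L]_n := \row_j lcomb b (fun i => g i 0 j).

Lemma expand_vintv g : vintv vL (expand g) <-> forall i, vintv vK (g i).
Proof.
split=> [g_vint i j|g_vint j].
  by have := g_vint j; rewrite mxE => /lcomb_vint_coef; apply.
by rewrite mxE; apply: vge_lcomb => [|i]; [exact: b_span.1 | exact: g_vint].
Qed.

Lemma expandB g g' : expand (g - g') = expand g - expand g'.
Proof.
by apply/rowP => j; rewrite !mxE -lcombB; apply: eq_bigr => i _; rewrite !ffunE !mxE.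
Qed.

Lemma expandD g g' : expand (g + g') = expand g + expand g'.
Proof.
by apply/rowP => j; rewrite !mxE -lcombD; apply: eq_bigr => i _; rewrite !ffunE !mxE.
Qed.

Lemma expand_inj : injective expand.
Proof.
move=> g g' e; apply/ffunP => i; apply/rowP => j; apply/eqP; rewrite -subr_eq0; apply/eqP.
have : lcomb b (fun i => g i 0 j - g' i 0 j) = 0.
  by rewrite lcombB; have /rowP/(_ j) := e; rewrite !mxE => ->; rewrite subrr.
by move/lcomb_inj/(_ i).
Qed.

Lemma expand_surj y : exists g, expand g = y.
Proof.
have /fin_all_exists [a ha] : forall j : 'I_n, exists a, y 0 j = lcomb b a.
  by move=> j; apply: lcomb_surj.
exists [ffun i => \row_j a j i]; apply/rowP => j; rewrite mxE ha.
by apply: eq_bigr => i _; rewrite ffunE mxE.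
Qed.

Lemma expand_mul g (T : 'M[K]_n) :
  expand [ffun i => g i *m T] = expand g *m map_mx (in_alg L) T.
Proof.
apply/rowP => j; rewrite !mxE /lcomb.
under eq_bigr => i _ do rewrite ffunE mxE scaler_suml.
rewrite exchange_big; apply: eq_bigr => l _.
rewrite !mxE mulr_suml; apply: eq_bigr => i _.
by rewrite mulrC -scalerAr mulr1 scalerA.
Qed.

Lemma expand_scale g (c : K) :
  expand [ffun i => c *: g i] = in_alg L c *: expand g.
Proof.
apply/rowP => j; rewrite !mxE -[in_alg L c * _]/(c%:A * _) mulr_algl -lcombZ.
by apply: eq_bigr => i _; rewrite ffunE mxE.
Qed.

Lemma expand_multv g (c : K) : c != 0 ->
  multv vL (in_alg L c) (expand g) <-> forall i, multv vK c (g i).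
Proof.
move=> c0; rewrite multvE ?fmorph_eq0 // -fmorphV -expand_scale expand_vintv.
by split=> hg i; have := hg i; rewrite ffunE multvE.
Qed.

Lemma expand_redker (c : K) (T : 'M[K]_n) g : c != 0 ->
  redker_S vL (in_alg L c) (map_mx (in_alg L) T) (expand g) <->
  forall i, redker_S vK c T (g i).
Proof.
move=> c0; rewrite /redker_S -expand_mul expand_multv // expand_vintv.
split=> [[g_vint gT] i|hg]; first by split; [apply: g_vint | have := gT i; rewrite ffunE].
by split=> i; [case: (hg i) | rewrite ffunE; case: (hg i)].
Qed.

Lemma quot_card_expand (SK NK : 'rV[K]_n -> Prop) (SL NL : 'rV[L]_n -> Prop) m :
  subgroup NK -> subgroup NL ->
  (forall g, SL (expand g) <-> forall i, SK (g i)) ->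
  (forall g, NL (expand g) <-> forall i, NK (g i)) ->
  quot_card SK NK m -> quot_card SL NL (m ^ k).
Proof.
move=> hNK hNL SE NE /(quot_card_ffun k hNK).
apply: (quot_card_bij (f := expand)) => // [g /SE //|y SLy|g g' _ _].
  have [g eg] := expand_surj y; exists g; first by apply/SE; rewrite eg.
  by rewrite eg subrr; case: hNL.
by rewrite -expandB NE; split=> h i; have := h i; rewrite ffunE.
Qed.

Lemma expand_sum g : expand g = \sum_i b i *: map_mx (in_alg L) (g i).
Proof.
apply/rowP => j; rewrite !mxE summxE; apply: eq_bigr => i _.
by rewrite !mxE mulrC -[in_alg L _ * _]/((g i 0 j)%:A * b i) mulr_algl.
Qed.

End Expansion.

Lemma quot_card_multv_base_change n r q :
  quot_card (@vintv K vK n) (multv vK (pi ^+ r)) q ->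
  quot_card (@vintv L vL n) (multv vL (in_alg L (pi ^+ r))) (q ^ k).
Proof.
apply: quot_card_expand (subgroup_multv hvK n _) (subgroup_multv hvL n _) _ _.
  exact: expand_vintv.
by move=> g; apply: expand_multv; rewrite expf_neq0.
Qed.

Lemma quot_card_base_change n r (T : 'M[K]_n) : vintm vK T ->
  exists m,
  [/\ quot_card (redker_S vL (in_alg L (pi ^+ r)) (map_mx (in_alg L) T))
        (multv vL (in_alg L (pi ^+ r))) (m ^ k),
      quot_card (vintv vL) (redcok_N vL (in_alg L (pi ^+ r)) (map_mx (in_alg L) T)) (m ^ k),
      quot_card (redker_S vK (pi ^+ r) T) (multv vK (pi ^+ r)) m &
      quot_card (vintv vK) (redcok_N vK (pi ^+ r) T) m].
Proof.
move=> T_vint; have [q hq] := exists_quot_card_multvK n r.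
have c_vint : vint vK (pi ^+ r) by apply: (vintX hvK); right; apply: ltW.
have [m [hker hcok]] := quot_card_redker_redcok hvK c_vint T_vint hq.
have hkerL := quot_card_expand (subgroup_multv hvK n _) (subgroup_multv hvL n _)
  (expand_redker T^~ (expf_neq0 r pi0)) (fun g => expand_multv g (expf_neq0 r pi0)) hker.
have TL_vint : vintm vL (map_mx (in_alg L) T) by move=> i j; rewrite mxE; apply/vint_algE.
have [mL [hkerL' hcokL]] := quot_card_redker_redcok hvL (c := in_alg L (pi ^+ r))
  (proj2 (vint_algE _) c_vint) TL_vint (quot_card_multv_base_change hq).
exists m; split => //.
by rewrite -(quot_card_uniq (subgroup_multv hvL n _) hkerL' hkerL).
Qed.

Lemma quot_card_redcok_le n r (U : 'M[L]_n) k0 m :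
  quot_card (vintv vL) (redcok_N vL (in_alg L (pi ^+ r)) U) k0 ->
  quot_card (vintv vK) (subcok_N vK (pi ^+ r) (descent_lattice U)) m ->
  (k0 <= m ^ k)%N.
Proof.
move=> hk0 hm; set c := pi ^+ r.
have hcok := subgroup_subcok hvK c (subgroup_descent_lattice U).
pose Nexp (y : 'rV[L]_n) := exists2 g : {ffun 'I_k -> 'rV_n},
  (forall i, subcok_N vK c (descent_lattice U) (g i)) & y = expand g.
have hNexp : subgroup Nexp.
  rewrite /Nexp; apply: (subgroup_image (@expandB n)).
  by split=> [i|g g' hg hg' i]; rewrite !ffunE; [apply: hcok.1 | apply: hcok.2].
have : quot_card (vintv vL) Nexp (m ^ k).
  apply: (quot_card_expand hcok hNexp (@expand_vintv n)) hm => g.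
  by split=> [[g' hg' /expand_inj ->]|hg]; [| exists g].
move=> hNexp_m; apply: (quot_card_le hNexp _ hNexp_m hk0) => _ [g hg ->].
have /fin_all_exists [P hP] : forall i, exists p : 'rV[K]_n * 'rV[K]_n * 'rV[L]_n,
    [/\ vintv vK p.1.2, vintv vL p.2, map_mx (in_alg L) p.1.1 = p.2 *m U &
        g i = p.1.1 + c *: p.1.2].
  by move=> i; have [l [z [[_ [y hy ly]] hz gi]]] := hg i; exists (l, z, y).
have -> : g = [ffun i => (P i).1.1] + [ffun i => c *: [ffun i => (P i).1.2] i].
  by apply/ffunP => i; rewrite !ffunE; have [_ _ _ ->] := hP i.
exists (\sum_i b i *: (P i).2), (expand [ffun i => (P i).1.2]); split.
- apply: (vintv_sum hvL) => i _; apply: (vintvZ hvL); first exact: b_span.1.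
  by have [] := hP i.
- by apply/expand_vintv => i; rewrite ffunE; have [] := hP i.
rewrite expandD expand_scale expand_sum mulmx_suml; congr (_ + _).
by apply: eq_bigr => i _; rewrite ffunE -scalemxAl; have [_ _ -> _] := hP i.
Qed.

Lemma quot_card_descent_lattice n r (U : 'M[L]_n) : vintm vL U ->
  (forall y, vintv vL y -> y *m U = 0 -> y = 0) ->
  exists k0 m,
  [/\ quot_card (redker_S vL (in_alg L (pi ^+ r)) U) (multv vL (in_alg L (pi ^+ r))) k0,
      quot_card (vintv vL) (redcok_N vL (in_alg L (pi ^+ r)) U) k0,
      quot_card (subker_S vK (pi ^+ r) (descent_lattice U))
        (subker_N (pi ^+ r) (descent_lattice U)) m,
      quot_card (vintv vK) (subcok_N vK (pi ^+ r) (descent_lattice U)) m &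
      (k0 <= m ^ k)%N].
Proof.
move=> U_vint U_inj; have [q hq] := exists_quot_card_multvK n r.
have c_vint : vint vK (pi ^+ r) by apply: (vintX hvK); right; apply: ltW.
have [k0 [hker hcok]] := quot_card_redker_redcok hvL (c := in_alg L (pi ^+ r))
  (proj2 (vint_algE _) c_vint) U_vint (quot_card_multv_base_change hq).
have [N hN] := descent_lattice_multv U_vint (det_neq0_of_vint_inj hvL piA0 vpi_gt0 U_inj).
have [q0 hq0] := exists_quot_card_multvK n N.
have [m [hsubker hsubcok]] := quot_card_subker_subcok hvK (expf_neq0 r pi0) c_vint
  (subgroup_descent_lattice U) (fun x => @proj1 _ _) (fun x => descent_lattice_scale c_vint)
  hN hq hq0.
by exists k0, m; split => //; apply: quot_card_redcok_le hcok hsubcok.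
Qed.

End IntegralBasis.
End Extension.

Theorem lemma7p2 (K : fieldType) (L : fieldExtType K) (vL : L -> int)
  (hL : local_field vL) (hK : local_field (fun a : K => vL (in_alg L a)))
  (pi : K) (hpi : uniformizer (fun a : K => vL (in_alg L a)) pi) (r n : nat) :
  let vK := fun a : K => vL (in_alg L a) in
  let cK := pi ^+ r in
  let cL := in_alg L (pi ^+ r) in
  let d := (\dim (fullv : {vspace L}))%N in
  (* (i) *)
  (forall T : 'M[K]_n, vintm vK T ->
     (forall x : 'rV[K]_n, vintv vK x -> x *m T = 0 -> x = 0) ->
     exists m : nat,
       [/\ quot_card (redker_S vL cL (map_mx (in_alg L) T)) (multv vL cL) (m ^ d),
           quot_card (vintv vL) (redcok_N vL cL (map_mx (in_alg L) T)) (m ^ d),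
           quot_card (redker_S vK cK T) (multv vK cK) m &
           quot_card (vintv vK) (redcok_N vK cK T) m]) /\
  (* (ii) *)
  (forall U : 'M[L]_n, vintm vL U ->
     (forall y : 'rV[L]_n, vintv vL y -> y *m U = 0 -> y = 0) ->
     let Lam := fun x : 'rV[K]_n =>
       vintv vK x /\ exists2 y : 'rV[L]_n, vintv vL y & map_mx (in_alg L) x = y *m U in
     exists k m : nat,
       [/\ quot_card (redker_S vL cL U) (multv vL cL) k,
           quot_card (vintv vL) (redcok_N vL cL U) k,
           quot_card (subker_S vK cK Lam) (subker_N cK Lam) m,
           quot_card (vintv vK) (subcok_N vK cK Lam) m &
           (k <= m ^ d)%N]).
Proof.
move=> vK cK cL d.
have [k [b [b_span b_free]]] := exists_residue_basis hL hK hpi.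
(* Part (i) holds without the injectivity of [T]. *)
rewrite /d (dim_fullv hL hK hpi b_span b_free); split=> [T T_vint _|U U_vint U_inj].
  exact (quot_card_base_change hL hK hpi b_span b_free r T_vint).
exact (quot_card_descent_lattice hL hK hpi b_span b_free r U_vint U_inj).
Qed.
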